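(* Let $n\ge 1$ and let $P_n$ be the path on the $n$ vertices $v_1v_2\cdots v_n$. Let $D$ be any dominating set of $P_n$ of minimum cardinality $\gamma(P_n)$, and let $\mathcal{C}_D(P_n)=\sum_{u\in D}\deg_{P_n}(u)$. Then: (i) if $n=3k$ for a positive integer $k$, then $\mathcal{C}_D(P_n)=2k$; (ii) if $n=3k+1$ for an integer $k\ge 0$, then $2k\le \mathcal{C}_D(P_n)\le 2k+2$; (iii) if $n=3k+2$ for an integer $k\ge 0$, then $2k+1\le \mathcal{C}_D(P_n)\le 2k+2$.
   Context: All graphs are finite and simple. A set $D\subseteq V(G)$ is a dominating set of $G$ if every vertex of $V(G)\setminus D$ has a neighbor in $D$. The domination number $\gamma(G)$ is the minimum cardinality of a dominating set, and a dominating set of cardinality $\gamma(G)$ is called a $\gamma$-set. For $D\subseteq V(G)$, the domination cover number (covering number) of $D$ is $\mathcal{C}_D(G)=\sum_{u\in D}\deg_G(u)$. *)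

From mathcomp Require Import all_boot.
Set Implicit Arguments. Unset Strict Implicit. Unset Printing Implicit Defensive.

Definition dominating (T : finType) (G : rel T) (D : {set T}) : bool :=
  [forall x, (x \in D) || [exists y in D, G x y]].

(* domination number: minimum cardinality of a dominating set
   (the whole vertex set is dominating, so #|T| is a valid start value). *)
Definition domination_number (T : finType) (G : rel T) : nat :=
  \big[minn/#|T|]_(D : {set T} | dominating G D) #|D|.

Definition gamma_set (T : finType) (G : rel T) (D : {set T}) : bool :=
  dominating G D && (#|D| == domination_number G).

Definition deg (T : finType) (G : rel T) (u : T) : nat := #|[set v | G u v]|.

Definition cover_number (T : finType) (G : rel T) (D : {set T}) : nat :=
  \sum_(u in D) deg G u.

(* path P_n on vertices 0,...,n-1 (v_1..v_n), i adjacent to i+1 *)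
Definition path_graph (n : nat) : rel 'I_n :=
  fun i j => (i.+1 == j :> nat) || (j.+1 == i :> nat).
Arguments path_graph n : clear implicits.

From mathcomp Require Import all_boot order.
From mathcomp Require Import zify.

Set Implicit Arguments.
Unset Strict Implicit.
Unset Printing Implicit Defensive.

(* The closed neighbourhoods of a dominating set D cover all n vertices, so
   C_D + |D| >= n; every vertex of P_n has degree at most 2, so C_D <= 2|D|;
   and the vertices v_2, v_5, v_8, ... (with v_n added when needed) dominate
   P_n, so |D| = gamma(P_n) <= ceil(n/3).  The three bounds, combined residue
   class by residue class, give the theorem. *)

Section Domination.
Variables (T : finType) (G : rel T).

Lemma domination_number_le_card (D : {set T}) :
  dominating G D -> domination_number G <= #|D|.
Proof.
rewrite /domination_number -leEnat -minEnat.
exact: Order.TotalTheory.bigmin_le_cond.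
Qed.

Lemma cover_number_le_mul (m : nat) (D : {set T}) :
  (forall u, deg G u <= m) -> cover_number G D <= m * #|D|.
Proof.
by move=> degG; rewrite /cover_number mulnC -sum_nat_const; apply: leq_sum.
Qed.

Hypotheses (symG : symmetric G) (irrG : irreflexive G).

Lemma card_closed_nbhd (u : T) : #|u |: [set v | G u v]| = (deg G u).+1.
Proof. by rewrite cardsU1 inE irrG. Qed.

Lemma card_le_cover_number_add (D : {set T}) :
  dominating G D -> #|T| <= cover_number G D + #|D|.
Proof.
move=> /forallP domD.
have -> : cover_number G D + #|D| = \sum_(u in D) #|u |: [set v | G u v]|.
  rewrite /cover_number -sum1_card -big_split /=.
  by apply: eq_bigr => u _; rewrite card_closed_nbhd addn1.
have coverT : [set: T] \subset \bigcup_(u in D) (u |: [set v | G u v]).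
  apply/subsetP => x _; have /orP [xD | /existsP [y /andP [yD Gxy]]] := domD x.
    by apply/bigcupP; exists x; rewrite ?setU11.
  by apply/bigcupP; exists y; rewrite // !inE symG Gxy orbT.
rewrite -cardsT (leq_trans (subset_leq_card coverT)) //.
elim/big_rec2: _ => [|u m U _ leUm]; first by rewrite cards0.
by rewrite (leq_trans (leq_card_setU _ _).1) ?leq_add2l.
Qed.

End Domination.

Lemma path_graph_sym (n : nat) : symmetric (path_graph n).
Proof. by move=> i j; rewrite /path_graph orbC. Qed.

Lemma path_graph_irrefl (n : nat) : irreflexive (path_graph n).
Proof. by move=> i; rewrite /path_graph orbb; lia. Qed.

Lemma deg_path_graph_le2 (n : nat) (u : 'I_n) : deg (path_graph n) u <= 2.
Proof.
case: n u => [[] //|n] u.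
have nbhd_sub : [set v | path_graph n.+1 u v] \subset [set inord u.+1; inord u.-1].
  apply/subsetP => v; rewrite !inE /path_graph => /orP [] /eqP uv;
  apply/orP; [left | right]; apply/eqP/val_inj; rewrite /= inordK;
  by have := ltn_ord u; have := ltn_ord v; lia.
by rewrite (leq_trans (subset_leq_card nbhd_sub)) // cards2; case: (_ != _).
Qed.

Lemma domination_number_path_graph_le (n : nat) :
  domination_number (path_graph n) <= (n + 2) %/ 3.
Proof.
case: n => [|n].
  rewrite (leq_trans (@domination_number_le_card _ _ set0 _)) ?cards0 //.
  by apply/forallP => -[].
(* block j = {3j, 3j+1, 3j+2} is dominated by its middle vertex, or by the
   last vertex n when the final block is truncated *)
pose mid (j : 'I_((n.+1 + 2) %/ 3)) : 'I_n.+1 := inord (minn (3 * j + 1) n).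
have domS : dominating (path_graph n.+1) (mid @: 'I_((n.+1 + 2) %/ 3)).
  apply/forallP => x; have jx : x %/ 3 < (n.+1 + 2) %/ 3 by have := ltn_ord x; lia.
  have midS : mid (Ordinal jx) \in mid @: 'I_((n.+1 + 2) %/ 3) by rewrite imset_f.
  case: (eqVneq (mid (Ordinal jx)) x) => [<- | ne]; first by rewrite midS.
  apply/orP; right; apply/existsP; exists (mid (Ordinal jx)); rewrite midS /=.
  move: ne; rewrite /path_graph -(inj_eq val_inj) /mid /= inordK; last by lia.
  by have := ltn_ord x; lia.
apply: leq_trans (domination_number_le_card domS) _.
by rewrite (leq_trans (leq_imset_card _ _)) // card_ord.
Qed.

Theorem mainTheorem1 (n : nat) (D : {set 'I_n}) :
  1 <= n -> gamma_set (path_graph n) D ->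
  (forall k : nat, 0 < k -> n = 3 * k ->
     cover_number (path_graph n) D = 2 * k) /\
  (forall k : nat, n = 3 * k + 1 ->
     2 * k <= cover_number (path_graph n) D <= 2 * k + 2) /\
  (forall k : nat, n = 3 * k + 2 ->
     2 * k + 1 <= cover_number (path_graph n) D <= 2 * k + 2).
Proof.
move=> _ /andP [domD /eqP cardD].
have := card_le_cover_number_add (@path_graph_sym n) (@path_graph_irrefl n) domD.
have := cover_number_le_mul D (@deg_path_graph_le2 n).
have := domination_number_path_graph_le n.
rewrite -cardD card_ord.
(* naming C_D and |D| makes their occurrences syntactically equal atoms for lia *)
set c := cover_number _ _; set d := #|D| => d_le c_le n_le.
by split; [move=> k _ | split=> k] => n_eq; lia.
Qed.
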